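(* Call two $n\times n$ matrices $B_1,B_2$ equivalent if there is an $n\times n$ permutation matrix $P$ with $P^{T}B_1P=B_2$. Then for each positive integer $n$, the number of equivalence classes of $n\times n$ $(0,1)$-matrices all of whose eigenvalues are positive real numbers equals the number of acyclic digraphs with $n$ unlabeled vertices (i.e. the number of isomorphism classes of acyclic digraphs on $n$ vertices).
   Context: A digraph has, for each ordered pair of vertices $(i,j)$, at most one edge from $i$ to $j$; loops and pairs of opposite edges are permitted, parallel edges are not. A digraph is acyclic if it contains no directed cycle of any length, including loops (cycles of length $1$) and cycles of length $2$. Eigenvalues are taken over $\mathbb{C}$. *)

From HB Require Import structures.
From mathcomp Require Import all_boot all_order all_algebra all_fingroup all_field.
From mathcomp Require Import boolp.
Set Implicit Arguments. Unset Strict Implicit. Unset Printing Implicit Defensive.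
Import Order.TTheory GRing.Theory Num.Theory.
Local Open Scope ring_scope.

(* A (0,1)-matrix is an n x n matrix with boolean entries; [zo_mx A] is the
   corresponding complex (algC) matrix with entries 0 and 1. *)
Definition zo_mx n (A : 'M[bool]_n) : 'M[algC]_n :=
  map_mx (fun b : bool => (b : nat)%:R) A.

(* All eigenvalues (over C) are positive real numbers.  In algC, [0 < z]
   means z is real and positive. *)
Definition all_eig_pos n (A : 'M[bool]_n) : Prop :=
  forall z : algC, eigenvalue (zo_mx A) z -> 0 < z.

Definition mx_equiv n (A B : 'M[bool]_n) : bool :=
  [exists s : 'S_n, (perm_mx s)^T *m zo_mx A *m perm_mx s == zo_mx B].

Definition num_pos_eig_classes n : nat :=
  #|[set [set B | `[< all_eig_pos B >] && mx_equiv A B]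
     | A in [set A : 'M[bool]_n | `[< all_eig_pos A >]]]|.

(* A digraph on vertex set 'I_n: a set of ordered pairs (i, j) = edge i -> j
   (loops and opposite pairs allowed, no parallel edges). *)
Definition digraph n := {set 'I_n * 'I_n}.
Definition edge n (G : digraph n) : rel 'I_n := fun i j => (i, j) \in G.

(* Acyclic: no directed cycle (non-empty sequence of distinct vertices
   v1 -> v2 -> ... -> vk -> v1), including loops (k = 1) and 2-cycles. *)
Definition acyclic n (G : digraph n) : Prop :=
  forall c : seq 'I_n, c != [::] -> ~~ ucycleb (edge G) c.

Definition dg_iso n (G H : digraph n) : bool :=
  [exists s : 'S_n, [forall i, forall j, edge G i j == edge H (s i) (s j)]].

Definition num_acyclic_unlabeled n : nat :=
  #|[set [set H | `[< acyclic H >] && dg_iso G H]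
     | G in [set G : digraph n | `[< acyclic G >]]]|.

From HB Require Import structures.
From mathcomp Require Import all_boot all_order all_algebra all_fingroup all_field.
From mathcomp Require Import boolp.
Set Implicit Arguments. Unset Strict Implicit. Unset Printing Implicit Defensive.
Import Order.TTheory GRing.Theory Num.Theory.
Local Open Scope ring_scope.

(* Let B be a (0,1)-matrix all of whose eigenvalues are positive.  Its trace
   is at most n, and its determinant, the product of the eigenvalues, is a
   positive integer, hence at least 1; by AM-GM every eigenvalue equals 1.  So
   B has a unit diagonal, and by Cayley-Hamilton B - I is nilpotent.  Now B - I
   is the adjacency matrix of a loopless digraph, and since the entries of the
   powers of an adjacency matrix count walks, a digraph is acyclic iff its
   adjacency matrix is nilpotent.  Thus B |-> B - I is a bijection onto the
   acyclic digraphs (with inverse G |-> I + A(G)), under which conjugation by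
   permutation matrices becomes digraph isomorphism. *)


Lemma path_notuniq_ucycle (T : eqType) (e : rel T) x p :
  path e x p -> ~~ uniq (x :: p) -> exists2 c, c != [::] & ucycleb e c.
Proof.
have [k] := ubnP (size p); elim: k => // k IHk in x p *.
rewrite ltnS cons_uniq negb_and negbK => le_p_k e_xp.
have [x_p _ | x'p /= nuniq_p] := boolP (x \in p).
  case/splitPr: x_p e_xp le_p_k => p1 p2.
  rewrite cat_path size_cat /= => /and3P[e_xp1 e_p1x _] le_p_k.
  have cyc_xp1 : path e x (rcons p1 x) by rewrite /= rcons_path e_xp1.
  have [uniq_xp1 | nuniq_xp1] := boolP (uniq (x :: p1)).
    by exists (x :: p1); rewrite // /ucycleb /= cyc_xp1.
  apply: IHk e_xp1 nuniq_xp1.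
  by rewrite (leq_trans _ le_p_k) // addnS ltnS leq_addr.
case: p e_xp le_p_k nuniq_p {x'p} => [//|z p] /= /andP[_ e_zp] le_p_k.
exact: IHk e_zp.
Qed.

Section NonnegMatrixPowers.
Variables (R : numDomainType) (n : nat) (N : 'M[R]_n).
Hypothesis N_ge0 : forall i j, 0 <= N i j.

Lemma exp_mx_ge0 k i j : 0 <= (N ^+ k) i j.
Proof.
elim: k i j => [|k IHk] i j; first by rewrite expr0 mxE ler0n.
by rewrite exprS -mulmxE mxE sumr_ge0 // => l _; rewrite mulr_ge0.
Qed.

Lemma exp_mx_entry_geM a b x y z :
  (N ^+ a) x y * (N ^+ b) y z <= (N ^+ (a + b)) x z.
Proof.
rewrite exprD -mulmxE mxE (bigD1 y) //= lerDl sumr_ge0 // => l _.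
by rewrite mulr_ge0 ?exp_mx_ge0.
Qed.

Lemma exp_mx_diag_ge1 k t x : 1 <= (N ^+ k) x x -> 1 <= (N ^+ (k * t)) x x.
Proof.
move=> ge1; elim: t => [|t IHt]; first by rewrite muln0 expr0 mxE eqxx.
by rewrite mulnS (le_trans _ (exp_mx_entry_geM _ _ _ x _)) // mulr_ege1.
Qed.

End NonnegMatrixPowers.

Definition adj_mx (R : pzRingType) n (G : digraph n) : 'M[R]_n :=
  \matrix_(i, j) (edge G i j)%:R.

Section AdjacencyMatrix.
Variables (R : numDomainType) (n : nat) (G : digraph n).
Local Notation A := (adj_mx R G).

Lemma adj_mx_ge0 i j : 0 <= A i j.
Proof. by rewrite mxE ler0n. Qed.

Lemma adj_mx_exp_neq0_path k i j : (A ^+ k) i j != 0 ->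
  exists p, [/\ size p = k, path (edge G) i p & last i p = j].
Proof.
elim: k i => [|k IHk] i.
  by rewrite expr0 mxE pnatr_eq0 eqb0 negbK => /eqP <-; exists [::].
rewrite exprS -mulmxE mxE => nz_sum.
have /existsP[l] : [exists l, A i l * (A ^+ k) l j != 0].
  apply: contraNT nz_sum => /existsPn all0.
  by rewrite big1 // => l _; apply/eqP/negbNE/all0.
rewrite mulf_eq0 negb_or mxE pnatr_eq0 eqb0 negbK.
case/andP=> e_il /IHk[p [<- e_lp <-]].
by exists (l :: p); rewrite /= e_il.
Qed.

Lemma path_adj_mx_exp_ge1 i p :
  path (edge G) i p -> 1 <= (A ^+ size p) i (last i p).
Proof.
elim: p i => [|j p IHp] i /=; first by rewrite expr0 mxE eqxx.
case/andP=> e_ij /IHp ge1; rewrite -add1n.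
rewrite (le_trans _ (exp_mx_entry_geM adj_mx_ge0 _ _ _ j _)) // mulr_ege1 //.
by rewrite expr1 mxE e_ij.
Qed.

Lemma acyclic_adj_mx_nilpotent : acyclic G -> A ^+ n = 0.
Proof.
move=> acyc; apply/matrixP => i j; rewrite [RHS]mxE; apply/eqP/contraT.
case/adj_mx_exp_neq0_path => p [size_p e_ip _].
have nuniq_ip : ~~ uniq (i :: p).
  apply/negP => /card_uniqP card_ip; have := max_card (mem (i :: p)).
  by rewrite card_ip /= size_p card_ord ltnn.
by have [c /acyc/negP] := path_notuniq_ucycle e_ip nuniq_ip.
Qed.

Lemma adj_mx_nilpotent_acyclic k : A ^+ k = 0 -> acyclic G.
Proof.
move=> nilA [//|x p] _; apply/negP => /andP[/path_adj_mx_exp_ge1 + _].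
rewrite size_rcons last_rcons => /(exp_mx_diag_ge1 adj_mx_ge0 k).
by rewrite mulnC exprM nilA exprS mul0r mxE ler10.
Qed.

End AdjacencyMatrix.

Lemma eigenvalue_unipotent (F : fieldType) n (M : 'M[F]_n) k z :
  (M - 1) ^+ k = 0 -> eigenvalue M z -> z = 1.
Proof.
move=> nilM /eigenvalueP[v Mv nz_v].
have vN j : v *m (M - 1) ^+ j = (z - 1) ^+ j *: v.
  elim: j => [|j IHj]; first by rewrite expr0 mulmx1 scale1r.
  rewrite exprSr -mulmxE mulmxA IHj -scalemxAl mulmxBr Mv mulmx1.
  by rewrite -{2}[v]scale1r -scalerBl scalerA -exprSr.
have /eqP := vN k; rewrite nilM mulmx0 eq_sym scaler_eq0 (negbTE nz_v) orbF.
by rewrite expf_eq0 subr_eq0 => /andP[_ /eqP].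
Qed.

Section CharPolyRoots.
Variables (F : fieldType) (n : nat) (M : 'M[F]_n) (r : seq F).
Hypothesis char_polyE : char_poly M = \prod_(z <- r) ('X - z%:P).

Lemma size_char_poly_roots : size r = n.
Proof. by have := size_char_poly M; rewrite char_polyE size_prod_XsubC => -[]. Qed.

Lemma mem_char_poly_roots z : (z \in r) = eigenvalue M z.
Proof. by rewrite eigenvalue_root_char char_polyE root_prod_XsubC. Qed.

Lemma sum_char_poly_roots : \sum_(z <- r) z = \tr M.
Proof.
have [n0 | n_gt0] := posnP n.
  have /size0nil -> : size r = 0%N by rewrite size_char_poly_roots.
  by rewrite big_nil /mxtrace big_pred0 // => -[i]; rewrite n0.
apply: oppr_inj; rewrite -char_poly_trace // char_polyE -size_char_poly_roots.
by rewrite coefPn_prod_XsubC // size_char_poly_roots -lt0n.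
Qed.

Lemma prod_char_poly_roots : \prod_(z <- r) z = \det M.
Proof.
apply: (mulfI (negbT (signr_eq0 F n))); rewrite -char_poly_det char_polyE.
by rewrite coef0_prod_XsubC size_char_poly_roots.
Qed.

End CharPolyRoots.

Lemma AGM_eq1 (R : numFieldType) (I : finType) (E : I -> R) :
  (forall i, 0 <= E i) -> \sum_i E i <= #|I|%:R -> 1 <= \prod_i E i ->
  forall i, E i = 1.
Proof.
move=> E_ge0 sum_le prod_ge i0.
have k_gt0 : (0 < #|I|)%N by apply/card_gt0P; exists i0.
have [AGM_le AGM_eq] := @leif_AGM R I predT E (fun i _ => E_ge0 i).
have mu_le1 : ((\sum_i E i) / #|I|%:R) ^+ #|I| <= 1.
  by rewrite exprn_ile1 ?divr_ge0 ?sumr_ge0 // ler_pdivrMr ?ltr0n // mul1r.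
have : \prod_i E i == ((\sum_i E i) / #|I|%:R) ^+ #|I|.
  by rewrite eq_le AGM_le (le_trans mu_le1).
rewrite AGM_eq => /forall_inP E_const.
have Ei0 i : E i = E i0 by apply/eqP/(forall_inP (E_const i isT)).
rewrite (eq_bigr _ (fun i _ => Ei0 i)) prodr_const in prod_ge.
rewrite (eq_bigr _ (fun i _ => Ei0 i)) sumr_const lerMn2r (gtn_eqF k_gt0) in sum_le.
apply/eqP; rewrite -(pexpr_eq1 k_gt0) // eq_le prod_ge andbT.
by rewrite exprn_ile1.
Qed.

Lemma AGM_seq_eq1 (R : numFieldType) (r : seq R) :
  {in r, forall z, 0 <= z} -> \sum_(z <- r) z <= (size r)%:R ->
  1 <= \prod_(z <- r) z -> {in r, forall z, z = 1}.
Proof.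
move=> r_ge0 sum_le prod_ge z r_z.
rewrite (big_nth 0) big_mkord -[size r in X in _ <= X]card_ord in sum_le.
rewrite (big_nth 0) big_mkord in prod_ge; rewrite -(nth_index 0 r_z).
have r_i : (index z r < size r)%N by rewrite index_mem.
apply: (AGM_eq1 _ sum_le prod_ge (Ordinal r_i)) => i.
exact/r_ge0/mem_nth.
Qed.

Lemma mxtrace_zo_mx n (B : 'M[bool]_n) : \tr (zo_mx B) = #|[pred i | B i i]|%:R.
Proof.
rewrite -sum1_card natr_sum [RHS]big_mkcond; apply: eq_bigr => i _.
by rewrite mxE inE; case: (B i i).
Qed.

Lemma det_zo_mx_ge1 n (B : 'M[bool]_n) :
  0 < \det (zo_mx B) -> 1 <= \det (zo_mx B).
Proof.
have -> : \det (zo_mx B) = (\det (map_mx (fun b : bool => (b : nat)%:Z) B))%:~R.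
  rewrite -det_map_mx; congr (\det _).
  by apply/matrixP => i j; rewrite !mxE; case: (B i j).
by rewrite ltr0z ler1z.
Qed.

Lemma all_eig_pos_roots n (B : 'M[bool]_n) r : all_eig_pos B ->
  char_poly (zo_mx B) = \prod_(z <- r) ('X - z%:P) -> r = nseq n 1.
Proof.
move=> pos charE; have r_gt0 z : z \in r -> 0 < z.
  by rewrite (mem_char_poly_roots charE); apply: pos.
rewrite -(size_char_poly_roots charE); apply/all_pred1P/allP => z r_z.
apply/eqP/(AGM_seq_eq1 _ _ _ r_z) => [y /r_gt0/ltW //||].
  rewrite (sum_char_poly_roots charE) mxtrace_zo_mx (size_char_poly_roots charE).
  by rewrite ler_nat -[n in (_ <= n)%N]card_ord max_card.
rewrite (prod_char_poly_roots charE) det_zo_mx_ge1 //.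
by rewrite -(prod_char_poly_roots charE) big_seq prodr_gt0.
Qed.

Lemma all_eig_pos_char_poly n (B : 'M[bool]_n) : all_eig_pos B ->
  char_poly (zo_mx B) = \prod_(z <- nseq n 1) ('X - z%:P).
Proof.
move=> pos; have [r] := closed_field_poly_normal (char_poly (zo_mx B)).
rewrite (monicP (char_poly_monic _)) scale1r => charE.
by rewrite charE -(all_eig_pos_roots pos charE).
Qed.

Lemma all_eig_pos_diag n (B : 'M[bool]_n) : all_eig_pos B -> forall i, B i i.
Proof.
move=> /all_eig_pos_char_poly/sum_char_poly_roots.
rewrite big_nseq iter_addr_0 mxtrace_zo_mx => /eqP.
rewrite eqr_nat => /eqP card_diag i.
have := cardC [pred i | B i i]; rewrite -card_diag card_ord => /(canRL (addKn n)).
by rewrite subnn => /card0_eq/(_ i); rewrite !inE => /negbFE.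
Qed.

Lemma all_eig_pos_unipotent n (B : 'M[bool]_n) :
  all_eig_pos B -> (zo_mx B - 1) ^+ n = 0.
Proof.
case: n B => [|n] B pos; first by apply/matrixP => -[].
have := Cayley_Hamilton (zo_mx B).
rewrite all_eig_pos_char_poly // big_nseq iter_mulr_1.
by rewrite rmorphXn rmorphB /= horner_mx_X horner_mx_C.
Qed.

Definition digraph_mx n (G : digraph n) : 'M[bool]_n :=
  \matrix_(i, j) ((i == j) || edge G i j).

Definition mx_digraph n (B : 'M[bool]_n) : digraph n :=
  [set ij | B ij.1 ij.2 && (ij.1 != ij.2)].

Section DigraphMatrix.
Variable n : nat.
Implicit Types (G : digraph n) (B : 'M[bool]_n).

Lemma acyclic_loopless G : acyclic G -> forall i, ~~ edge G i i.
Proof. by move=> acyc i; have := acyc [:: i] isT; rewrite /ucycleb /= !andbT. Qed.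

Lemma digraph_mxK G : (forall i, ~~ edge G i i) -> mx_digraph (digraph_mx G) = G.
Proof.
move=> loopless; apply/setP => -[i j]; rewrite inE mxE /=.
by case: eqVneq => [<- | _]; rewrite ?andbT ?andbF //; apply/esym/negbTE/loopless.
Qed.

Lemma mx_digraphK B : (forall i, B i i) -> digraph_mx (mx_digraph B) = B.
Proof.
move=> diagB; apply/matrixP => i j; rewrite mxE /edge inE /=.
by case: eqVneq => [<- | _]; rewrite ?diagB ?andbT.
Qed.

Lemma zo_mx_sub1 B :
  (forall i, B i i) -> zo_mx B - 1 = adj_mx algC (mx_digraph B).
Proof.
move=> diagB; apply/matrixP => i j; rewrite !mxE /edge inE /=.
by case: eqVneq => [<- | _]; rewrite ?diagB /= ?subrr ?mulr0n ?subr0 ?andbT.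
Qed.

Lemma acyclic_all_eig_pos G : acyclic G -> all_eig_pos (digraph_mx G).
Proof.
move=> acyc z eig_z; suff -> : z = 1 by exact: ltr01.
apply: (eigenvalue_unipotent (k := n) _ eig_z).
rewrite zo_mx_sub1 => [|i]; last by rewrite mxE eqxx.
by rewrite digraph_mxK ?acyclic_adj_mx_nilpotent //; exact: acyclic_loopless.
Qed.

Lemma all_eig_pos_acyclic B : all_eig_pos B -> acyclic (mx_digraph B).
Proof.
move=> pos; apply: (@adj_mx_nilpotent_acyclic algC _ _ n).
by rewrite -zo_mx_sub1 ?all_eig_pos_unipotent //; exact: all_eig_pos_diag.
Qed.

Lemma conj_perm_mxE (R : pzRingType) (s : 'S_n) (M : 'M[R]_n) i j :
  ((perm_mx s)^T *m M *m perm_mx s) i j = M ((s^-1)%g i) ((s^-1)%g j).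
Proof.
rewrite tr_perm_mx -row_permE -[s in perm_mx s]invgK -col_permE.
by rewrite !mxE.
Qed.

Lemma eq_zo_mx B1 B2 i j k l :
  (zo_mx B1 i j == zo_mx B2 k l) = (B1 i j == B2 k l).
Proof. by rewrite !mxE eqr_nat; case: (B1 i j); case: (B2 k l). Qed.

Lemma mx_equivE B1 B2 :
  mx_equiv B1 B2 =
  [exists s : 'S_n, [forall i, forall j, B1 i j == B2 (s i) (s j)]].
Proof.
apply: eq_existsb => s; apply/eqP/forallP => [conjB i | B12].
  apply/forallP => j; have /matrixP/(_ (s i) (s j))/eqP := conjB.
  by rewrite conj_perm_mxE !permK eq_zo_mx.
apply/matrixP => i j; apply/eqP; rewrite conj_perm_mxE eq_zo_mx.
by have /forallP/(_ ((s^-1)%g j)) := B12 ((s^-1)%g i); rewrite !permKV.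
Qed.

Lemma mx_equiv_digraph_mx G H :
  (forall i, ~~ edge G i i) -> (forall i, ~~ edge H i i) ->
  mx_equiv (digraph_mx G) (digraph_mx H) = dg_iso G H.
Proof.
move=> loopG loopH; rewrite mx_equivE; apply: eq_existsb => s.
apply: eq_forallb => i; apply: eq_forallb => j; rewrite !mxE (inj_eq perm_inj).
case: (eqVneq i j) => [<- | _] //.
by rewrite (negbTE (loopG i)) (negbTE (loopH (s i))).
Qed.

End DigraphMatrix.

Section ClassTransfer.
Variables (T U : finType) (P : pred T) (Q : pred U) (relT : rel T) (relU : rel U).
Variables (f : T -> U) (g : U -> T).
Hypotheses (fP : {in P, forall x, Q (f x)}) (gQ : {in Q, forall y, P (g y)}).
Hypotheses (fK : {in P, cancel f g}) (gK : {in Q, cancel g f}).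
Hypothesis f_rel : {in P &, forall x y, relU (f x) (f y) = relT x y}.

Lemma class_image x : P x ->
  [set y | Q y && relU (f x) y] = f @: [set y | P y && relT x y].
Proof.
move=> Px; apply/setP => y; rewrite inE; apply/andP/imsetP => [[Qy rel_xy] | [z]].
  have Pgy := gQ Qy; exists (g y); last by rewrite gK.
  by rewrite inE Pgy -f_rel ?gK.
by rewrite inE => /andP[Pz rel_xz] ->; rewrite fP // f_rel.
Qed.

Lemma card_classes_transfer :
  #|[set [set y | Q y && relU x y] | x in [set x | Q x]]| =
  #|[set [set y | P y && relT x y] | x in [set x | P x]]|.
Proof.
have classes_image :
    [set [set y | Q y && relU x y] | x in [set x | Q x]] =
    (fun C : {set T} => f @: C) @:
      [set [set y | P y && relT x y] | x in [set x | P x]].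
  apply/setP => C; apply/imsetP/imsetP => [[y] | [D /imsetP[x]]].
    rewrite inE => Qy ->; exists [set z | P z && relT (g y) z].
      by apply: imset_f; rewrite inE gQ.
    by rewrite -class_image ?gQ ?gK.
  by rewrite inE => Px -> ->; exists (f x); rewrite ?inE ?fP ?class_image.
rewrite classes_image; apply: card_in_imset => _ _ /imsetP[x _ ->] /imsetP[x' _ ->].
have fK_class z :
    g @: (f @: [set y | P y && relT z y]) = [set y | P y && relT z y].
  rewrite -imset_comp -[RHS]imset_id; apply: eq_in_imset => y.
  by rewrite inE => /andP[Py _]; apply: fK.
by move=> eq_classes; rewrite -fK_class eq_classes fK_class.
Qed.

End ClassTransfer.

Theorem mainTheorem5 (n : nat) : (0 < n)%N ->
  num_pos_eig_classes n = num_acyclic_unlabeled n.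
Proof.
(* The statement holds for n = 0 as well. *)
move=> _; rewrite /num_pos_eig_classes /num_acyclic_unlabeled.
apply: (card_classes_transfer (P := fun G => `[< acyclic G >])
  (Q := fun B => `[< all_eig_pos B >]) (f := @digraph_mx n) (g := @mx_digraph n)).
- by move=> G /asboolP/acyclic_all_eig_pos/asboolP.
- by move=> B /asboolP/all_eig_pos_acyclic/asboolP.
- by move=> G /asboolP/acyclic_loopless/digraph_mxK.
- by move=> B /asboolP/all_eig_pos_diag/mx_digraphK.
- move=> G H /asboolP/acyclic_loopless loopG /asboolP/acyclic_loopless loopH.
  exact: mx_equiv_digraph_mx.
Qed.
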